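(* Let $f\in\mathbb R[x_1,\dots,x_n]$ be a circuit polynomial $f(x)=\sum_{j=0}^r f_{\alpha(j)}x^{\alpha(j)}+f_{\alpha^\star}x^{\alpha^\star}$ with $r\le n$ and barycentric coordinates $\lambda_0,\dots,\lambda_r$ of $\alpha^\star$, and set $\Theta=\prod_{j=0}^r(f_{\alpha(j)}/\lambda_j)^{\lambda_j}$. Then $f$ is coercive on $\mathbb R^n$ if and only if one of the following holds: (a) $r=n$ and $f$ satisfies (C1), (C2), (C3); (b) $r=n-1$, $f$ satisfies (C1), (C2), (C3), and moreover $f_{\alpha^\star}>-\Theta$ if $\alpha^\star\in 2\mathbb N_0^n$, while $|f_{\alpha^\star}|<\Theta$ if $\alpha^\star\notin 2\mathbb N_0^n$.
   Context: A polynomial is coercive on $\mathbb R^n$ if $f(x)\to+\infty$ as $\|x\|\to+\infty$. A circuit polynomial is $f(x)=\sum_{j=0}^r f_{\alpha(j)}x^{\alpha(j)}+f_{\alpha^\star}x^{\alpha^\star}$ (with $f_{\alpha^\star}\ne 0$ and $\alpha^\star\in\mathbb N_0^n$) such that: $r\le n$; $\alpha(j)\in 2\mathbb N_0^n$ and $f_{\alpha(j)}>0$ for all $j$; the vertex set of the Newton polytope $\mathrm{conv}(A(f))$ is exactly $\{\alpha(0),\dots,\alpha(r)\}$ and these points are affinely independent; and $\alpha^\star=\sum_{j=0}^r\lambda_j\alpha(j)$ uniquely with all $\lambda_j>0$, $\sum_j\lambda_j=1$. Here $A(f)$ is the set of exponents with nonzero coefficient. The Newton polytope at infinity is $\mathrm{New}_\infty(f)=\mathrm{conv}(A(f)\cup\{0\})$,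 $V_0(f)$ its vertex set and $V(f)=V_0(f)\setminus\{0\}$. Conditions: (C1) $V(f)\subset 2\mathbb N_0^n$; (C2) $f_\alpha>0$ for all $\alpha\in V(f)$; (C3) for every $i\in\{1,\dots,n\}$, $V(f)$ contains a vector $2k_ie_i$ with $k_i\in\mathbb N$ ($e_i$ standard unit vectors). *)

From Stdlib Require Import Reals Lra Lia Arith List.
Open Scope R_scope.

(* Points of R^n are represented as functions nat -> R; only the
   coordinates i < n matter.  Exponent vectors in N_0^n are nat -> nat. *)

Fixpoint rsum (m : nat) (g : nat -> R) : R :=
  match m with O => 0 | S k => rsum k g + g k end.
Fixpoint rprod (m : nat) (g : nat -> R) : R :=
  match m with O => 1 | S k => rprod k g * g k end.

Definition toR (b : nat -> nat) : nat -> R := fun i => INR (b i).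
Definition zeroPt : nat -> R := fun _ => 0.
Definition eqn_pt (n : nat) (p q : nat -> R) : Prop := forall i, (i < n)%nat -> p i = q i.

Definition monom (n : nat) (beta : nat -> nat) (x : nat -> R) : R :=
  rprod n (fun i => x i ^ beta i).

Definition norm2 (n : nat) (x : nat -> R) : R := sqrt (rsum n (fun i => x i ^ 2)).

Definition coercive (n : nat) (f : (nat -> R) -> R) : Prop :=
  forall M : R, exists K : R, forall x : nat -> R, norm2 n x > K -> f x > M.

Definition circ_eval (n r : nat) (alpha : nat -> nat -> nat) (c : nat -> R)
  (als : nat -> nat) (cs : R) (x : nat -> R) : R :=
  rsum (S r) (fun j => c j * monom n (alpha j) x) + cs * monom n als x.

Definition eqb_upto (n : nat) (b g : nat -> nat) : bool :=
  forallb (fun i => Nat.eqb (b i) (g i)) (seq 0 n).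

(* coefficient of the monomial x^beta in f (terms with equal exponent merged) *)
Definition coef (n r : nat) (alpha : nat -> nat -> nat) (c : nat -> R)
  (als : nat -> nat) (cs : R) (beta : nat -> nat) : R :=
  rsum (S r) (fun j => if eqb_upto n (alpha j) beta then c j else 0)
  + (if eqb_upto n als beta then cs else 0).

(* A(f): the exponents (among those appearing in the representation)
   whose coefficient is nonzero *)
Definition supp (n r : nat) (alpha : nat -> nat -> nat) (c : nat -> R)
  (als : nat -> nat) (cs : R) : list (nat -> nat) :=
  filter (fun b => if Req_EM_T (coef n r alpha c als cs b) 0 then false else true)
    (map alpha (seq 0 (S r)) ++ als :: nil).

Definition in_conv (n : nat) (S : list (nat -> R)) (p : nat -> R) : Prop :=
  exists w : nat -> R,
    (forall k, (k < length S)%nat -> 0 <= w k) /\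
    rsum (length S) w = 1 /\
    forall i, (i < n)%nat ->
      p i = rsum (length S) (fun k => w k * nth k S zeroPt i).

Definition is_vertex (n : nat) (S : list (nat -> R)) (p : nat -> R) : Prop :=
  in_conv n S p /\
  forall a b : nat -> R, forall t : R,
    in_conv n S a -> in_conv n S b -> 0 < t < 1 ->
    eqn_pt n p (fun i => t * a i + (1 - t) * b i) ->
    eqn_pt n a p /\ eqn_pt n b p.

Definition suppR n r alpha c als cs : list (nat -> R) :=
  map toR (supp n r alpha c als cs).
Definition suppR0 n r alpha c als cs : list (nat -> R) :=
  zeroPt :: suppR n r alpha c als cs.

Definition inV n r alpha c als cs (p : nat -> R) : Prop :=
  is_vertex n (suppR0 n r alpha c als cs) p /\ ~ eqn_pt n p zeroPt.

Definition even_vec (n : nat) (b : nat -> nat) : Prop :=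
  forall i, (i < n)%nat -> Nat.Even (b i).

Definition CondC1 n r alpha c als cs : Prop :=
  forall p, inV n r alpha c als cs p ->
    exists b : nat -> nat, eqn_pt n p (toR b) /\ even_vec n b.
Definition CondC2 n r alpha c als cs : Prop :=
  forall b : nat -> nat, inV n r alpha c als cs (toR b) ->
    coef n r alpha c als cs b > 0.
Definition CondC3 n r alpha c als cs : Prop :=
  forall i, (i < n)%nat -> exists k : nat, (1 <= k)%nat /\
    inV n r alpha c als cs (fun l => if Nat.eqb l i then INR (2 * k) else 0).

Definition aff_indep (n r : nat) (alpha : nat -> nat -> nat) : Prop :=
  forall mu : nat -> R,
    rsum (S r) mu = 0 ->
    (forall i, (i < n)%nat -> rsum (S r) (fun j => mu j * INR (alpha j i)) = 0) ->
    forall j, (j <= r)%nat -> mu j = 0.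

Definition bary (n r : nat) (alpha : nat -> nat -> nat) (als : nat -> nat)
  (lam : nat -> R) : Prop :=
  rsum (S r) lam = 1 /\
  forall i, (i < n)%nat -> INR (als i) = rsum (S r) (fun j => lam j * INR (alpha j i)).

Definition is_circuit (n r : nat) (alpha : nat -> nat -> nat) (c : nat -> R)
  (als : nat -> nat) (cs : R) : Prop :=
  (r <= n)%nat /\
  cs <> 0 /\
  (forall j, (j <= r)%nat -> even_vec n (alpha j) /\ c j > 0) /\
  (forall p : nat -> R, is_vertex n (suppR n r alpha c als cs) p <->
     exists j, (j <= r)%nat /\ eqn_pt n p (toR (alpha j))) /\
  aff_indep n r alpha /\
  (exists lam, bary n r alpha als lam /\ (forall j, (j <= r)%nat -> lam j > 0) /\
     forall mu, bary n r alpha als mu -> forall j, (j <= r)%nat -> mu j = lam j).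

Definition Theta (r : nat) (c lam : nat -> R) : R :=
  rprod (S r) (fun j => Rpower (c j / lam j) (lam j)).

(* If no exponent [alpha j] is a positive multiple of [e_i], then [f] is constant along
   the i-th axis; otherwise the largest such exponent is a vertex of the Newton polytope
   at infinity, which gives (C3), and since the vertices of that polytope are among the
   [alpha j], (C1) and (C2) hold as well.  The [n] axis vertices
   are distinct [alpha j], hence [r = n] or [r = n - 1].
   Conversely, by (C3) the vertex part [g(x) = sum_j c_j x^(alpha j)] is coercive, and
   weighted AM-GM bounds the inner term: [|x^als| <= (g(x) / Theta_nu)^rho] whenever
   [als = rho sum_j nu_j alpha(j)].  If [r = n - 1] the [alpha j] are the axis vertices,
   [rho = 1], [nu = lam], and [|f_als| < Theta] (or [f_als > -Theta] when the inner
   term is a square) gives [f >= d g] with [d > 0]; explicit points where every vertex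
   term equals [lam_j e^z] show that these bounds are necessary.  If [r = n], the origin
   is an affine combination of the [alpha j], which allows [rho < 1], so the inner term
   is [o(g)]. *)

From Stdlib Require Import Reals Lra Lia Arith List Classical.
Open Scope R_scope.

Lemma rsum_ext m g h : (forall i, (i < m)%nat -> g i = h i) -> rsum m g = rsum m h.
Proof.
  induction m as [|m IH]; intros H; simpl; auto.
  rewrite IH by (intros; apply H; lia). rewrite (H m) by lia; auto.
Qed.

Lemma rsum_plus m g h : rsum m (fun i => g i + h i) = rsum m g + rsum m h.
Proof. induction m as [|m IH]; simpl; [lra|]. rewrite IH; lra. Qed.

Lemma rsum_minus m g h : rsum m (fun i => g i - h i) = rsum m g - rsum m h.
Proof. induction m as [|m IH]; simpl; [lra|]. rewrite IH; lra. Qed.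

Lemma rsum_scal m a g : rsum m (fun i => a * g i) = a * rsum m g.
Proof. induction m as [|m IH]; simpl; [lra|]. rewrite IH; lra. Qed.

Lemma rsum_0 m : rsum m (fun _ => 0) = 0.
Proof. induction m as [|m IH]; simpl; lra. Qed.

Lemma rsum_le m g h : (forall i, (i < m)%nat -> g i <= h i) -> rsum m g <= rsum m h.
Proof.
  induction m as [|m IH]; intros H; simpl; [lra|].
  assert (g m <= h m) by (apply H; lia).
  assert (rsum m g <= rsum m h) by (apply IH; intros; apply H; lia).
  lra.
Qed.

Lemma rsum_nonneg m g : (forall i, (i < m)%nat -> 0 <= g i) -> 0 <= rsum m g.
Proof. intros H. rewrite <- (rsum_0 m). apply rsum_le, H. Qed.

Lemma rsum_le_const m g t : (forall i, (i < m)%nat -> g i <= t) -> rsum m g <= INR m * t.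
Proof.
  induction m as [|m IH]; intros H; simpl rsum; [simpl; lra|]. rewrite S_INR.
  assert (g m <= t) by (apply H; lia).
  assert (rsum m g <= INR m * t) by (apply IH; intros; apply H; lia).
  lra.
Qed.

Lemma rsum_term_le m g k :
  (forall i, (i < m)%nat -> 0 <= g i) -> (k < m)%nat -> g k <= rsum m g.
Proof.
  induction m as [|m IH]; intros H Hk; simpl; [lia|].
  assert (0 <= g m) by (apply H; lia).
  destruct (Nat.eq_dec k m) as [->|Hne].
  - assert (0 <= rsum m g) by (apply rsum_nonneg; intros; apply H; lia). lra.
  - assert (g k <= rsum m g) by (apply IH; [intros; apply H; lia | lia]). lra.
Qed.

Lemma rsum_nonneg_eq0 m g :
  (forall i, (i < m)%nat -> 0 <= g i) -> rsum m g = 0 -> forall i, (i < m)%nat -> g i = 0.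
Proof.
  intros H H0 i Hi.
  assert (g i <= rsum m g) by (apply rsum_term_le; auto).
  assert (0 <= g i) by auto.
  lra.
Qed.

Lemma rsum_pos_exists m w : rsum m w > 0 -> exists k, (k < m)%nat /\ w k > 0.
Proof.
  induction m as [|m IH]; simpl; intros H; [lra|].
  destruct (Rlt_dec 0 (w m)); [exists m; split; [lia | lra]|].
  destruct IH as [k [Hk Hw]]; [lra|]. exists k; split; [lia | auto].
Qed.

Lemma rsum_delta m k h :
  (k < m)%nat -> rsum m (fun i => if Nat.eqb i k then h i else 0) = h k.
Proof.
  induction m as [|m IH]; intros Hk; [lia|]. simpl.
  destruct (Nat.eq_dec k m) as [->|Hne].
  - rewrite Nat.eqb_refl, (rsum_ext m _ (fun _ => 0)), rsum_0; [lra|].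
    intros i Hi. destruct (Nat.eqb_spec i m); [lia | auto].
  - rewrite IH by lia. destruct (Nat.eqb_spec m k); [lia | lra].
Qed.

Lemma rsum_delta_l m k h :
  (k < m)%nat -> rsum m (fun i => if Nat.eqb k i then h i else 0) = h k.
Proof.
  intros Hk. rewrite <- (rsum_delta m k h Hk).
  apply rsum_ext; intros. rewrite Nat.eqb_sym; auto.
Qed.

Lemma rsum_swap m p (h : nat -> nat -> R) :
  rsum m (fun i => rsum p (fun j => h i j)) = rsum p (fun j => rsum m (fun i => h i j)).
Proof.
  induction m as [|m IH]; simpl.
  - rewrite rsum_0; auto.
  - rewrite IH, <- rsum_plus; auto.
Qed.

Lemma rsum_shift m h : rsum (S m) h = h 0%nat + rsum m (fun j => h (S j)).
Proof. induction m as [|m IH]; simpl in *; [lra|]. rewrite IH; lra. Qed.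

Lemma rprod_ext m g h : (forall i, (i < m)%nat -> g i = h i) -> rprod m g = rprod m h.
Proof.
  induction m as [|m IH]; intros H; simpl; auto.
  rewrite IH by (intros; apply H; lia). rewrite (H m) by lia; auto.
Qed.

Lemma rprod_exp m h : rprod m (fun j => exp (h j)) = exp (rsum m h).
Proof. induction m as [|m IH]; simpl; [rewrite exp_0 | rewrite IH, exp_plus]; auto. Qed.

Lemma rprod_eq0 m g k : (k < m)%nat -> g k = 0 -> rprod m g = 0.
Proof.
  induction m as [|m IH]; intros Hk H; [lia|]. simpl.
  destruct (Nat.eq_dec k m) as [->|]; [rewrite H | rewrite IH by (auto; lia)]; ring.
Qed.

Fixpoint rmin (m : nat) (h : nat -> R) : R :=
  match m with O => h O | S k => Rmin (rmin k h) (h (S k)) end.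

Lemma rmin_le m h j : (j <= m)%nat -> rmin m h <= h j.
Proof.
  induction m as [|m IH]; intros Hj; simpl.
  - replace j with 0%nat by lia; lra.
  - destruct (Nat.eq_dec j (S m)) as [->|]; [apply Rmin_r|].
    eapply Rle_trans; [apply Rmin_l | apply IH; lia].
Qed.

Lemma rmin_pos m h : (forall j, (j <= m)%nat -> h j > 0) -> rmin m h > 0.
Proof.
  induction m as [|m IH]; intros H; simpl; [apply H; lia|].
  apply Rmin_glb_lt; [apply IH; intros | ]; apply H; lia.
Qed.

Lemma Rdiv_nonneg a b : 0 <= a -> 0 < b -> 0 <= a / b.
Proof. intros. unfold Rdiv. apply Rmult_le_pos; [|left; apply Rinv_0_lt_compat]; auto. Qed.

Lemma exp_le_compat x y : x <= y -> exp x <= exp y.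
Proof. intros [H|H]; [left; apply exp_increasing | subst]; lra. Qed.

Lemma exp_le_inv x y : exp x <= exp y -> x <= y.
Proof.
  intros H. destruct (Rle_dec x y); auto.
  assert (exp y < exp x) by (apply exp_increasing; lra). lra.
Qed.

Lemma pow_exp a k : exp a ^ k = exp (INR k * a).
Proof.
  induction k as [|k IH]; simpl pow; [rewrite Rmult_0_l, exp_0; auto|].
  rewrite IH, S_INR, <- exp_plus. f_equal; ring.
Qed.

Lemma INR_double_pos k : (1 <= k)%nat -> 0 < INR (2 * k).
Proof. intros. apply lt_0_INR. lia. Qed.

Lemma pow_even_nonneg x k : 0 <= x ^ (2 * k).
Proof. rewrite pow_mult. apply pow_le. nra. Qed.

Lemma pow_even_ge x k : (1 <= k)%nat -> x ^ 2 - 1 <= x ^ (2 * k).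
Proof.
  intros Hk. destruct (Rle_dec 1 (x ^ 2)).
  - rewrite pow_mult. pose proof (Rle_pow (x ^ 2) 1 k r Hk). rewrite pow_1 in H. lra.
  - pose proof (pow_even_nonneg x k). lra.
Qed.

Lemma pow_abs_exp x k : (k = 0%nat \/ x <> 0) -> Rabs (x ^ k) = exp (INR k * ln (Rabs x)).
Proof.
  intros [->|H]; [simpl; rewrite Rmult_0_l, exp_0, Rabs_R1; auto|].
  rewrite <- RPow_abs, <- ln_pow, exp_ln by (try apply pow_lt; apply Rabs_pos_lt; auto).
  auto.
Qed.

(* Weighted AM-GM, via [ln t <= t - 1] applied to [t = a j / A]. *)
Lemma weighted_amgm m nu a :
  (forall j, (j < m)%nat -> nu j > 0) -> rsum m nu = 1 ->
  (forall j, (j < m)%nat -> a j > 0) ->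
  exp (rsum m (fun j => nu j * ln (a j))) <= rsum m (fun j => nu j * a j).
Proof.
  intros Hnu Hs Ha. set (A := rsum m (fun j => nu j * a j)).
  destruct (rsum_pos_exists m nu) as [k [Hk Hpk]]; [lra|].
  assert (HA : 0 < A).
  { apply Rlt_le_trans with (nu k * a k); [specialize (Ha k Hk); nra|].
    apply (rsum_term_le _ (fun j => nu j * a j)); auto.
    intros j Hj; specialize (Ha j Hj); specialize (Hnu j Hj); nra. }
  rewrite <- (exp_ln A) by auto. apply exp_le_compat.
  apply Rle_trans with (rsum m (fun j => nu j * (ln A + a j / A - 1))).
  - apply rsum_le. intros j Hj. apply Rmult_le_compat_l; [left; apply Hnu; auto|].
    assert (Haj : 0 < a j) by (apply Ha; auto).
    pose proof (exp_ineq1_le (ln (a j / A))) as H.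
    rewrite exp_ln in H by (apply Rdiv_lt_0_compat; auto).
    unfold Rdiv in *. rewrite ln_mult, ln_Rinv in H by (try apply Rinv_0_lt_compat; auto).
    lra.
  - right. rewrite (rsum_ext _ _ (fun j => (ln A - 1) * nu j + / A * (nu j * a j)))
      by (intros; unfold Rdiv; ring).
    rewrite rsum_plus, !rsum_scal, Hs. fold A. field. lra.
Qed.

Definition log_monom (n : nat) (b : nat -> nat) (x : nat -> R) : R :=
  rsum n (fun i => INR (b i) * ln (Rabs (x i))).

Definition axis_pt (i : nat) (t : R) : nat -> R := fun l => if Nat.eqb l i then t else 0.
Definition neg_coord (l0 : nat) (x : nat -> R) : nat -> R :=
  fun l => if Nat.eqb l l0 then - x l else x l.
Definition on_axis (n i : nat) (b : nat -> nat) : Prop :=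
  forall l, (l < n)%nat -> l <> i -> b l = 0%nat.

Lemma monom_ext_exp n b b' x :
  (forall i, (i < n)%nat -> b i = b' i) -> monom n b x = monom n b' x.
Proof. intros H; unfold monom; apply rprod_ext; intros; rewrite H; auto. Qed.

Lemma monom_even_nonneg n b x : even_vec n b -> 0 <= monom n b x.
Proof.
  unfold monom, even_vec. induction n as [|n IH]; intros H; simpl; [lra|].
  destruct (H n) as [k Hk]; [lia|]. rewrite Hk.
  apply Rmult_le_pos; [apply IH; intros; apply H; lia | apply pow_even_nonneg].
Qed.

Lemma monom_eq0 n b x l : (l < n)%nat -> (0 < b l)%nat -> x l = 0 -> monom n b x = 0.
Proof.
  intros Hl Hb Hx. apply (rprod_eq0 _ _ l Hl). rewrite Hx.
  destruct (b l); [lia|]. simpl; ring.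
Qed.

Lemma monom_abs_exp n b x : (forall i, (i < n)%nat -> (0 < b i)%nat -> x i <> 0) ->
  Rabs (monom n b x) = exp (log_monom n b x).
Proof.
  unfold monom, log_monom. induction n as [|n IH]; intros Hx; simpl;
    [rewrite exp_0, Rabs_R1; auto|].
  rewrite Rabs_mult, IH, exp_plus by (intros; apply Hx; lia). f_equal.
  apply pow_abs_exp. destruct (b n) eqn:E; auto. right; apply Hx; lia.
Qed.

Lemma monom_exp n b e :
  monom n b (fun l => exp (e l)) = exp (rsum n (fun l => INR (b l) * e l)).
Proof.
  unfold monom. induction n as [|n IH]; simpl; [rewrite exp_0; auto|].
  rewrite IH, exp_plus, pow_exp; auto.
Qed.

Lemma monom_on_axis n b x i : (i < n)%nat -> on_axis n i b -> monom n b x = x i ^ b i.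
Proof.
  unfold monom, on_axis. induction n as [|n IH]; intros Hi H; [lia|]. simpl.
  destruct (Nat.eq_dec i n) as [->|Hne].
  - rewrite (rprod_ext n _ (fun _ => 1)) by (intros l Hl; rewrite H by lia; auto).
    assert (E : forall m, rprod m (fun _ => 1) = 1)
      by (induction m as [|m IHm]; simpl; [auto | rewrite IHm; ring]).
    rewrite E; ring.
  - rewrite IH by (auto; lia). rewrite (H n) by lia. simpl; ring.
Qed.

Lemma monom_neg_coord n b x l0 : (l0 < n)%nat ->
  monom n b (neg_coord l0 x) = (-1) ^ (b l0) * monom n b x.
Proof.
  unfold monom, neg_coord. induction n as [|n IH]; intros Hl; [lia|]. simpl.
  destruct (Nat.eq_dec l0 n) as [->|Hne].
  - rewrite Nat.eqb_refl, (rprod_ext n _ (fun i => x i ^ b i)).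
    + replace (- x n) with ((-1) * x n) by ring. rewrite Rpow_mult_distr. ring.
    + intros i Hi. destruct (Nat.eqb_spec i n); [lia | auto].
  - rewrite IH by lia. destruct (Nat.eqb_spec n l0); [lia | ring].
Qed.

Lemma monom_axis_pt_const n b i t t' : (i < n)%nat -> (on_axis n i b -> b i = 0%nat) ->
  monom n b (axis_pt i t) = monom n b (axis_pt i t').
Proof.
  intros Hi H. destruct (classic (on_axis n i b)) as [Ho|Ho].
  - rewrite !(monom_on_axis n b _ i Hi Ho), H by auto. auto.
  - apply not_all_ex_not in Ho as [l Ho].
    apply imply_to_and in Ho as [Hl Ho]. apply imply_to_and in Ho as [Hli Ho].
    rewrite !(monom_eq0 n b _ l Hl); auto; try lia;
      unfold axis_pt; destruct (Nat.eqb_spec l i); auto; lia.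
Qed.

Lemma norm2_axis_pt n i t : (i < n)%nat -> norm2 n (axis_pt i t) = Rabs t.
Proof.
  intros Hi. unfold norm2, axis_pt.
  rewrite (rsum_ext _ _ (fun l => if Nat.eqb l i then t ^ 2 else 0))
    by (intros l _; destruct (Nat.eqb l i); simpl; ring).
  rewrite (rsum_delta _ _ (fun _ => t ^ 2)), <- Rsqr_pow2, sqrt_Rsqr_abs; auto.
Qed.

Lemma norm2_ge_coord n x i : (i < n)%nat -> Rabs (x i) <= norm2 n x.
Proof.
  intros Hi. unfold norm2. rewrite <- sqrt_Rsqr_abs. apply sqrt_le_1_alt. rewrite Rsqr_pow2.
  apply (rsum_term_le _ (fun i => x i ^ 2)); auto. intros; apply pow2_ge_0.
Qed.

Lemma in_conv_eqn n S p q : in_conv n S p -> eqn_pt n p q -> in_conv n S q.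
Proof.
  intros [w [H1 [H2 H3]]] He. exists w; repeat split; auto.
  intros i Hi. rewrite <- He; auto.
Qed.

Lemma is_vertex_eqn n S p q : is_vertex n S p -> eqn_pt n p q -> is_vertex n S q.
Proof.
  intros [Hc Hx] He. split; [eapply in_conv_eqn; eauto|].
  intros a b t Ha Hb Ht Hq.
  destruct (Hx a b t Ha Hb Ht) as [E1 E2]; [intros i Hi; rewrite He; auto|].
  split; intros i Hi; rewrite <- He; auto.
Qed.

Lemma in_conv_mem n S s : In s S -> in_conv n S s.
Proof.
  intros Hs. destruct (In_nth S s zeroPt Hs) as [k [Hk Hn]].
  exists (fun l => if Nat.eqb l k then 1 else 0). repeat split.
  - intros l _. destruct (Nat.eqb l k); lra.
  - apply (rsum_delta _ _ (fun _ => 1)); auto.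
  - intros i Hi.
    rewrite (rsum_ext _ _ (fun l => if Nat.eqb l k then nth l S zeroPt i else 0))
      by (intros l _; destruct (Nat.eqb l k); ring).
    rewrite rsum_delta, Hn; auto.
Qed.

Lemma in_conv_cons n S z q : in_conv n S q -> in_conv n (z :: S) q.
Proof.
  intros [w [H1 [H2 H3]]].
  exists (fun k => match k with O => 0 | S k' => w k' end). simpl length. repeat split.
  - intros [|k] Hk; [lra | apply H1; lia].
  - rewrite rsum_shift, <- H2, Rplus_0_l. apply rsum_ext; auto.
  - intros i Hi. rewrite rsum_shift, H3, Rmult_0_l, Rplus_0_l by auto.
    apply rsum_ext; auto.
Qed.

Lemma in_conv_convex2 n S a b t : in_conv n S a -> in_conv n S b -> 0 <= t <= 1 ->
  in_conv n S (fun i => t * a i + (1 - t) * b i).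
Proof.
  intros [wa [Ha1 [Ha2 Ha3]]] [wb [Hb1 [Hb2 Hb3]]] Ht.
  exists (fun k => t * wa k + (1 - t) * wb k). repeat split.
  - intros k Hk. specialize (Ha1 k Hk). specialize (Hb1 k Hk). nra.
  - rewrite rsum_plus, !rsum_scal, Ha2, Hb2. ring.
  - intros i Hi. rewrite Ha3, Hb3, <- !rsum_scal, <- rsum_plus by auto.
    apply rsum_ext; intros; ring.
Qed.

Lemma in_conv_convex n S m (mu : nat -> R) (P : nat -> nat -> R) :
  (forall j, (j < m)%nat -> in_conv n S (P j)) -> (forall j, (j < m)%nat -> 0 <= mu j) ->
  rsum m mu = 1 -> in_conv n S (fun i => rsum m (fun j => mu j * P j i)).
Proof.
  revert mu. induction m as [|m IH]; intros mu HP Hmu Hs; simpl in Hs; [lra|].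
  assert (0 <= rsum m mu) by (apply rsum_nonneg; intros; apply Hmu; lia).
  assert (0 <= mu m) by (apply Hmu; lia).
  destruct (Req_dec (mu m) 1) as [E|E].
  - assert (Z : forall j, (j < m)%nat -> mu j = 0)
      by (apply rsum_nonneg_eq0; [intros; apply Hmu; lia | lra]).
    apply (in_conv_eqn _ _ (P m)); [apply HP; lia|].
    intros i Hi. simpl. rewrite (rsum_ext _ _ (fun _ => 0)), rsum_0, E
      by (intros j Hj; rewrite Z by auto; ring).
    ring.
  - set (t := mu m) in *.
    assert (Hq : in_conv n S (fun i => rsum m (fun j => (mu j / (1 - t)) * P j i))).
    { apply IH.
      - intros; apply HP; lia.
      - intros j Hj. apply Rdiv_nonneg; [apply Hmu; lia | lra].
      - unfold Rdiv. rewrite (rsum_ext _ _ (fun j => / (1 - t) * mu j)) by (intros; ring).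
        rewrite rsum_scal. replace (rsum m mu) with (1 - t) by lra. field. lra. }
    apply (in_conv_eqn _ _ _ _ (in_conv_convex2 _ _ _ _ t (HP m (Nat.lt_succ_diag_r m)) Hq ltac:(lra))).
    intros i Hi. simpl. unfold Rdiv.
    rewrite (rsum_ext _ (fun j => mu j * / (1 - t) * P j i) (fun j => / (1 - t) * (mu j * P j i)))
      by (intros; ring).
    rewrite rsum_scal. unfold t in *. field. lra.
Qed.

Lemma in_conv_nonneg n S a :
  (forall s, In s S -> forall l, (l < n)%nat -> 0 <= s l) ->
  in_conv n S a -> forall l, (l < n)%nat -> 0 <= a l.
Proof.
  intros HS [w [H1 [H2 H3]]] l Hl. rewrite H3 by auto. apply rsum_nonneg. intros k Hk.
  apply Rmult_le_pos; auto. apply HS; auto. apply nth_In; auto.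
Qed.

Lemma is_vertex_in n S p : is_vertex n S p -> exists s, In s S /\ eqn_pt n p s.
Proof.
  intros [[w [H1 [H2 H3]]] Hx].
  destruct (rsum_pos_exists (length S) w) as [k [Hk Hw]]; [lra|].
  assert (w k <= 1) by (rewrite <- H2; apply rsum_term_le; auto).
  (* [p] is the convex combination of the k-th point and of [b], with weight [w k / 2]. *)
  set (t := w k / 2). set (a := nth k S zeroPt).
  set (b := fun i => (p i - t * a i) / (1 - t)).
  assert (Ha : in_conv n S a) by (apply in_conv_mem, nth_In; auto).
  assert (Hb : in_conv n S b).
  { exists (fun l => (w l - (if Nat.eqb l k then t else 0)) / (1 - t)). repeat split.
    - intros l Hl. apply Rdiv_nonneg; [|unfold t; lra].
      destruct (Nat.eqb_spec l k); [subst; unfold t | specialize (H1 l Hl)]; lra.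
    - unfold Rdiv.
      rewrite (rsum_ext _ _ (fun l => / (1 - t) * (w l - (if Nat.eqb l k then t else 0))))
        by (intros; ring).
      rewrite rsum_scal, rsum_minus, H2, (rsum_delta _ _ (fun _ => t)) by auto.
      field; unfold t; lra.
    - intros i Hi. unfold b, Rdiv.
      rewrite (rsum_ext _ _ (fun l => / (1 - t) * (w l * nth l S zeroPt i
                 - (if Nat.eqb l k then t * nth l S zeroPt i else 0))))
        by (intros l _; destruct (Nat.eqb l k); ring).
      rewrite rsum_scal, rsum_minus, (rsum_delta _ _ (fun l => t * nth l S zeroPt i)), <- H3
        by auto.
      unfold a. ring. }
  destruct (Hx a b t Ha Hb) as [E _]; [unfold t; lra | intros i Hi; unfold b; field; unfold t; lra|].
  exists a. split; [apply nth_In; auto | intros i Hi; rewrite E; auto].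
Qed.

(* In a hull of points of the nonnegative orthant, a point on the i-th axis is a
   combination of hull points on that axis only. *)
Lemma in_conv_axis_bound n S i M a : (i < n)%nat ->
  (forall s, In s S -> forall l, (l < n)%nat -> 0 <= s l) ->
  (forall s, In s S -> (forall l, (l < n)%nat -> l <> i -> s l = 0) -> s i <= M) ->
  in_conv n S a -> (forall l, (l < n)%nat -> l <> i -> a l = 0) -> a i <= M.
Proof.
  intros Hi HS HM [w [H1 [H2 H3]]] Ha.
  set (off := fun (s : nat -> R) => rsum n (fun l => if Nat.eqb l i then 0 else s l)).
  assert (Hoff_nonneg : forall s, In s S -> 0 <= off s).
  { intros s Hs. apply rsum_nonneg; intros l Hl. destruct (Nat.eqb l i); [lra | apply HS; auto]. }
  assert (Hoff : rsum (length S) (fun k => w k * off (nth k S zeroPt)) = 0).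
  { unfold off.
    rewrite (rsum_ext _ _ (fun k => rsum n (fun l =>
               if Nat.eqb l i then 0 else w k * nth k S zeroPt l))).
    2:{ intros k _. rewrite <- rsum_scal. apply rsum_ext; intros; destruct (Nat.eqb _ _); ring. }
    rewrite rsum_swap, (rsum_ext _ _ (fun _ => 0)); [apply rsum_0|].
    intros l Hl. destruct (Nat.eqb_spec l i); [apply rsum_0|]. rewrite <- H3; auto. }
  assert (Z : forall k, (k < length S)%nat -> w k * off (nth k S zeroPt) = 0).
  { apply rsum_nonneg_eq0; auto. intros k Hk.
    apply Rmult_le_pos; auto. apply Hoff_nonneg, nth_In; auto. }
  rewrite H3 by auto. rewrite <- (Rmult_1_r M), <- H2, <- rsum_scal.
  apply rsum_le. intros k Hk. specialize (Z k Hk). set (s := nth k S zeroPt) in *.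
  assert (Hs : In s S) by (apply nth_In; auto).
  specialize (H1 k Hk).
  destruct (Req_dec (w k) 0) as [E|E]; [rewrite E; lra|].
  assert (Hs0 : off s = 0) by (destruct (Rmult_integral _ _ Z); [contradiction | auto]).
  assert (s i <= M); [|nra].
  apply HM; auto. intros l Hl Hli.
  assert (Hnn : forall l, (l < n)%nat -> 0 <= (if Nat.eqb l i then 0 else s l)).
  { intros l' Hl'. destruct (Nat.eqb l' i); [lra | apply HS; auto]. }
  pose proof (rsum_nonneg_eq0 _ _ Hnn Hs0 l Hl) as Q. cbv beta in Q.
  destruct (Nat.eqb_spec l i); [lia | auto].
Qed.

Lemma exists_argmax m (P : nat -> Prop) (h : nat -> nat) : (exists j, (j <= m)%nat /\ P j) ->
  exists j, (j <= m)%nat /\ P j /\ forall j', (j' <= m)%nat -> P j' -> (h j' <= h j)%nat.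
Proof.
  induction m as [|m IH]; intros [j0 [Hj0 HP0]].
  - exists 0%nat. replace j0 with 0%nat in * by lia. repeat split; auto.
    intros j' Hj' _. replace j' with 0%nat by lia. auto.
  - destruct (classic (exists j, (j <= m)%nat /\ P j)) as [Ex|Nex].
    + destruct (IH Ex) as [j [Hj [HPj Hmax]]].
      destruct (classic (P (S m) /\ (h j < h (S m))%nat)) as [[HPS Hlt]|HS].
      * exists (S m); repeat split; auto. intros j' Hj' HP'.
        destruct (Nat.eq_dec j' (S m)); [subst; auto|]. specialize (Hmax j' ltac:(lia) HP'); lia.
      * exists j; repeat split; auto. intros j' Hj' HP'.
        destruct (Nat.eq_dec j' (S m)); [subst | apply Hmax; auto; lia].
        apply Nat.nlt_ge. intros Hlt. apply HS. auto.
    + exists (S m). assert (j0 = S m) as ->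
        by (destruct (Nat.eq_dec j0 (S m)); auto; exfalso; apply Nex; exists j0; split; auto; lia).
      repeat split; auto. intros j' Hj' HP'.
      destruct (Nat.eq_dec j' (S m)); [subst; auto|].
      exfalso; apply Nex; exists j'; split; auto; lia.
Qed.

Lemma finite_choice2 (P : nat -> nat -> nat -> Prop) m :
  (forall i, (i < m)%nat -> exists j k, P i j k) ->
  exists f g : nat -> nat, forall i, (i < m)%nat -> P i (f i) (g i).
Proof.
  induction m as [|m IH]; intros H.
  - exists (fun _ => 0%nat), (fun _ => 0%nat). intros; lia.
  - destruct IH as [f [g Hfg]]; [intros; apply H; lia|].
    destruct (H m ltac:(lia)) as [j [k Hjk]].
    exists (fun i => if Nat.eqb i m then j else f i), (fun i => if Nat.eqb i m then k else g i).
    intros i Hi. destruct (Nat.eqb_spec i m); [subst; auto | apply Hfg; lia].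
Qed.

Lemma exists_not_in_range n r (tau : nat -> nat) : (n <= r)%nat ->
  exists m, (m <= r)%nat /\ forall i, (i < n)%nat -> tau i <> m.
Proof.
  intros Hr. apply NNPP; intros Hn.
  assert (Hincl : incl (seq 0 (S r)) (map tau (seq 0 n))).
  { intros j Hj. apply in_seq in Hj. apply NNPP; intros Hj'. apply Hn. exists j; split; [lia|].
    intros i Hi E. apply Hj', in_map_iff. exists i; split; auto. apply in_seq; lia. }
  pose proof (NoDup_incl_length (seq_NoDup (S r) 0) Hincl) as L.
  rewrite length_map, !length_seq in L. lia.
Qed.

Lemma eqb_upto_iff n b g : eqb_upto n b g = true <-> (forall i, (i < n)%nat -> b i = g i).
Proof.
  unfold eqb_upto. rewrite forallb_forall. split.
  - intros H i Hi. apply Nat.eqb_eq, H, in_seq. lia.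
  - intros H x Hx. apply in_seq in Hx. apply Nat.eqb_eq, H. lia.
Qed.

Lemma eqb_upto_ext n x b b' :
  (forall i, (i < n)%nat -> b i = b' i) -> eqb_upto n x b = eqb_upto n x b'.
Proof.
  intros H. apply Bool.eq_iff_eq_true. rewrite !eqb_upto_iff.
  split; intros E i Hi; rewrite E; auto; symmetry; auto.
Qed.

Lemma coef_ext n r alpha c als cs b b' : (forall i, (i < n)%nat -> b i = b' i) ->
  coef n r alpha c als cs b = coef n r alpha c als cs b'.
Proof.
  intros H. unfold coef. rewrite (eqb_upto_ext n als b b' H). f_equal.
  apply rsum_ext; intros. rewrite (eqb_upto_ext n (alpha i) b b' H); auto.
Qed.

Lemma supp_cases n r alpha c als cs b : In b (supp n r alpha c als cs) ->
  (exists j, (j <= r)%nat /\ b = alpha j) \/ b = als.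
Proof.
  unfold supp. intros H. apply filter_In in H as [H _].
  apply in_app_iff in H as [H|[H|[]]]; auto.
  left. apply in_map_iff in H as [j [<- Hj]]. apply in_seq in Hj. exists j; split; auto; lia.
Qed.

Lemma suppR0_cases n r alpha c als cs s : In s (suppR0 n r alpha c als cs) ->
  s = zeroPt \/ exists b, In b (supp n r alpha c als cs) /\ s = toR b.
Proof.
  unfold suppR0, suppR. intros [H|H]; auto.
  right. apply in_map_iff in H as [b [<- Hb]]. eauto.
Qed.

Lemma suppR0_nonneg n r alpha c als cs s :
  In s (suppR0 n r alpha c als cs) -> forall l, (l < n)%nat -> 0 <= s l.
Proof.
  intros Hs l Hl. destruct (suppR0_cases _ _ _ _ _ _ _ Hs) as [->|[b [_ ->]]].
  - unfold zeroPt; lra.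
  - apply pos_INR.
Qed.

Definition vertex_sum (n r : nat) (alpha : nat -> nat -> nat) (c : nat -> R) (x : nat -> R) : R :=
  rsum (S r) (fun j => c j * monom n (alpha j) x).

Lemma circ_eval_ge n r alpha c als cs x :
  circ_eval n r alpha c als cs x >= vertex_sum n r alpha c x - Rabs cs * Rabs (monom n als x).
Proof.
  unfold circ_eval, vertex_sum. rewrite <- Rabs_mult.
  pose proof (Rle_abs (- (cs * monom n als x))). rewrite Rabs_Ropp in H. lra.
Qed.

Definition log_theta (r : nat) (c nu : nat -> R) : R := rsum (S r) (fun j => nu j * ln (c j / nu j)).

Lemma Theta_exp r c lam : Theta r c lam = exp (log_theta r c lam).
Proof. apply rprod_exp. Qed.

Lemma Theta_pos r c lam : Theta r c lam > 0.
Proof. rewrite Theta_exp. apply exp_pos. Qed.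

Section CircuitPolynomial.

Variables (n r : nat) (alpha : nat -> nat -> nat) (c : nat -> R) (als : nat -> nat) (cs : R)
  (lam : nat -> R).

Hypothesis alpha_even : forall j, (j <= r)%nat -> even_vec n (alpha j).
Hypothesis c_pos : forall j, (j <= r)%nat -> c j > 0.
Hypothesis alpha_in_hull :
  forall j, (j <= r)%nat -> in_conv n (suppR n r alpha c als cs) (toR (alpha j)).
Hypothesis alpha_aff_indep : aff_indep n r alpha.
Hypothesis lam_sum : rsum (S r) lam = 1.
Hypothesis als_bary :
  forall i, (i < n)%nat -> INR (als i) = rsum (S r) (fun j => lam j * INR (alpha j i)).
Hypothesis lam_pos : forall j, (j <= r)%nat -> lam j > 0.
Hypothesis bary_unique :
  forall mu, bary n r alpha als mu -> forall j, (j <= r)%nat -> mu j = lam j.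

Local Notation f := (circ_eval n r alpha c als cs).
Local Notation g := (vertex_sum n r alpha c).
Local Notation newton0 := (suppR0 n r alpha c als cs).

Lemma alpha_inj j l : (j <= r)%nat -> (l <= r)%nat ->
  (forall i, (i < n)%nat -> alpha j i = alpha l i) -> j = l.
Proof.
  intros Hj Hl Heq. destruct (Nat.eq_dec j l) as [|Hne]; auto. exfalso.
  set (mu := fun k => (if Nat.eqb k j then 1 else 0) - (if Nat.eqb k l then 1 else 0)).
  assert (Hmu : mu j = 0).
  { apply alpha_aff_indep; auto; unfold mu.
    - rewrite rsum_minus, (rsum_delta _ _ (fun _ => 1)), (rsum_delta _ _ (fun _ => 1)) by lia.
      ring.
    - intros i Hi.
      rewrite (rsum_ext _ _ (fun k => (if Nat.eqb k j then INR (alpha k i) else 0)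
                                  - (if Nat.eqb k l then INR (alpha k i) else 0)))
        by (intros k _; destruct (Nat.eqb k j), (Nat.eqb k l); ring).
      rewrite rsum_minus, !rsum_delta, Heq by lia. ring. }
  unfold mu in Hmu. rewrite Nat.eqb_refl in Hmu. destruct (Nat.eqb_spec j l); [lia | lra].
Qed.

Lemma als_neq_alpha j : (1 <= r)%nat -> (j <= r)%nat ->
  ~ (forall i, (i < n)%nat -> als i = alpha j i).
Proof.
  intros Hr Hj Heq.
  set (mu := fun k => if Nat.eqb k j then 1 else 0).
  assert (Hb : bary n r alpha als mu).
  { split; [apply (rsum_delta _ _ (fun _ => 1)); lia|].
    intros i Hi.
    rewrite (rsum_ext _ _ (fun k => if Nat.eqb k j then INR (alpha k i) else 0))
      by (intros k _; unfold mu; destruct (Nat.eqb k j); ring).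
    rewrite rsum_delta, Heq by lia; auto. }
  set (l := if Nat.eqb j 0 then 1%nat else 0%nat).
  assert (l <= r /\ l <> j)%nat as [Hl Hlj] by (unfold l; destruct (Nat.eqb_spec j 0); lia).
  pose proof (bary_unique mu Hb l Hl) as E. specialize (lam_pos l Hl).
  unfold mu in E. destruct (Nat.eqb_spec l j); [lia | lra].
Qed.

Lemma als_eq_alpha0 : r = 0%nat -> forall i, (i < n)%nat -> als i = alpha 0%nat i.
Proof.
  intros -> i Hi. apply INR_eq. rewrite als_bary by auto.
  simpl in *. replace (lam 0%nat) with 1 by lra. ring.
Qed.

Lemma coef_alpha j b : (1 <= r)%nat -> (j <= r)%nat ->
  (forall i, (i < n)%nat -> b i = alpha j i) -> coef n r alpha c als cs b = c j.
Proof.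
  intros Hr Hj Hb. rewrite (coef_ext _ _ _ _ _ _ b (alpha j) Hb). unfold coef.
  destruct (eqb_upto n als (alpha j)) eqn:E.
  { exfalso. rewrite eqb_upto_iff in E. apply (als_neq_alpha j Hr Hj E). }
  rewrite (rsum_ext _ _ (fun l => if Nat.eqb l j then c l else 0)).
  { rewrite rsum_delta by lia. ring. }
  intros l Hl. destruct (Nat.eqb_spec l j) as [->|Hlj].
  - rewrite (proj2 (eqb_upto_iff _ _ _)); auto.
  - destruct (eqb_upto n (alpha l) (alpha j)) eqn:E2; auto.
    rewrite eqb_upto_iff in E2. exfalso; apply Hlj, alpha_inj; auto; lia.
Qed.

Lemma coef_alpha0 b : r = 0%nat ->
  (forall i, (i < n)%nat -> b i = alpha 0%nat i) -> coef n r alpha c als cs b = c 0%nat + cs.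
Proof.
  intros Hr Hb. pose proof (als_eq_alpha0 Hr) as Ha. subst r. unfold coef. simpl.
  rewrite (proj2 (eqb_upto_iff n (alpha 0%nat) b)), (proj2 (eqb_upto_iff n als b));
    [ring | |]; intros; rewrite Hb; auto.
Qed.

Lemma alpha_in_newton0 j : (j <= r)%nat -> in_conv n newton0 (toR (alpha j)).
Proof. intros Hj. apply in_conv_cons, alpha_in_hull, Hj. Qed.

(* [als = t alpha(0) + (1 - t) q] with [t = lam 0] and [q] a convex combination of the
   remaining [alpha j]. *)
Lemma als_not_vertex : (1 <= r)%nat -> ~ is_vertex n newton0 (toR als).
Proof.
  intros Hr [_ Hx].
  assert (Hsh : lam 0%nat + rsum r (fun j => lam (S j)) = 1) by (rewrite <- rsum_shift; auto).
  assert (lam 1%nat <= rsum r (fun j => lam (S j))).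
  { apply (rsum_term_le _ (fun j => lam (S j)) 0); [intros; left; apply lam_pos | ]; lia. }
  assert (lam 1%nat > 0) by (apply lam_pos; lia). assert (lam 0%nat > 0) by (apply lam_pos; lia).
  set (t := lam 0%nat) in *.
  set (q := fun i => rsum r (fun j => (lam (S j) / (1 - t)) * toR (alpha (S j)) i)).
  assert (Hq : in_conv n newton0 q).
  { apply in_conv_convex.
    - intros; apply alpha_in_newton0; lia.
    - intros j Hj. apply Rdiv_nonneg; [left; apply lam_pos; lia | lra].
    - unfold Rdiv. rewrite (rsum_ext _ _ (fun j => / (1 - t) * lam (S j))), rsum_scal
        by (intros; ring).
      replace (rsum r (fun j => lam (S j))) with (1 - t) by lra. field; lra. }
  destruct (Hx (toR (alpha 0%nat)) q t (alpha_in_newton0 0 ltac:(lia)) Hq) as [E _]; [lra| |].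
  - intros i Hi. unfold q, toR. rewrite als_bary, rsum_shift by auto.
    unfold Rdiv.
    rewrite (rsum_ext _ (fun j => lam (S j) * / (1 - t) * INR (alpha (S j) i))
                        (fun j => / (1 - t) * (lam (S j) * INR (alpha (S j) i))))
      by (intros; ring).
    rewrite rsum_scal. unfold t in *. field. lra.
  - apply (als_neq_alpha 0 Hr ltac:(lia)). intros i Hi. apply INR_eq. symmetry. apply (E i Hi).
Qed.

Lemma newton0_vertex_alpha p : inV n r alpha c als cs p ->
  exists j, (j <= r)%nat /\ eqn_pt n p (toR (alpha j)).
Proof.
  intros [Hv Hnz]. destruct (is_vertex_in _ _ _ Hv) as [s [Hs Hps]].
  destruct (suppR0_cases _ _ _ _ _ _ _ Hs) as [->|[b [Hb ->]]]; [contradiction|].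
  destruct (supp_cases _ _ _ _ _ _ _ Hb) as [[j [Hj ->]]| ->]; [eauto|].
  destruct (Nat.eq_dec r 0) as [Hr|Hr].
  - exists 0%nat; split; [lia|]. intros i Hi. rewrite Hps by auto. unfold toR.
    rewrite als_eq_alpha0; auto.
  - exfalso. apply als_not_vertex; [lia|]. eapply is_vertex_eqn; eauto.
Qed.

Lemma circuit_CondC1 : CondC1 n r alpha c als cs.
Proof.
  intros p Hp. destruct (newton0_vertex_alpha p Hp) as [j [Hj He]].
  exists (alpha j). split; auto.
Qed.

Lemma als_on_axis_alpha i : on_axis n i als -> forall j, (j <= r)%nat -> on_axis n i (alpha j).
Proof.
  intros Ho j Hj l Hl Hli.
  assert (Z : rsum (S r) (fun j => lam j * INR (alpha j l)) = 0)
    by (rewrite <- als_bary, Ho; auto).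
  assert (Hnn : forall k, (k < S r)%nat -> 0 <= lam k * INR (alpha k l))
    by (intros k Hk; apply Rmult_le_pos; [left; apply lam_pos; lia | apply pos_INR]).
  pose proof (rsum_nonneg_eq0 _ _ Hnn Z j ltac:(lia)) as Zj. specialize (lam_pos j Hj).
  apply INR_eq. destruct (Rmult_integral _ _ Zj); simpl; lra.
Qed.

Lemma coercive_axis_exponent : coercive n f ->
  forall i, (i < n)%nat -> exists j, (j <= r)%nat /\ on_axis n i (alpha j) /\ (1 <= alpha j i)%nat.
Proof.
  intros Hco i Hi. apply NNPP; intros Hn.
  assert (Hj : forall j, (j <= r)%nat -> on_axis n i (alpha j) -> alpha j i = 0%nat).
  { intros j Hj Ho. destruct (alpha j i) eqn:E; auto.
    exfalso; apply Hn; exists j; repeat split; auto; lia. }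
  assert (Ha : on_axis n i als -> als i = 0%nat).
  { intros Ho. apply INR_eq. rewrite als_bary by auto.
    rewrite (rsum_ext _ _ (fun _ => 0)); [apply rsum_0|].
    intros j Hjr. rewrite Hj; [simpl; ring | lia | apply als_on_axis_alpha; auto; lia]. }
  assert (Hc : forall t, f (axis_pt i t) = f (axis_pt i 0)).
  { intros t. unfold circ_eval. rewrite (monom_axis_pt_const n als i t 0 Hi Ha). f_equal.
    apply rsum_ext. intros j Hjr. rewrite (monom_axis_pt_const n (alpha j) i t 0 Hi); auto.
    apply Hj; lia. }
  destruct (Hco (f (axis_pt i 0))) as [K HK].
  specialize (HK (axis_pt i (Rabs K + 1))). rewrite norm2_axis_pt, Hc in HK by auto.
  pose proof (Rle_abs K). pose proof (Rabs_pos K).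
  rewrite Rabs_right in HK by lra. lra.
Qed.

Section AxisMaximum.

Variables (i j : nat).
Hypothesis i_lt_n : (i < n)%nat.
Hypothesis j_le_r : (j <= r)%nat.
Hypothesis alpha_j_on_axis : on_axis n i (alpha j).
Hypothesis alpha_j_max :
  forall j', (j' <= r)%nat -> on_axis n i (alpha j') -> (alpha j' i <= alpha j i)%nat.

Lemma newton0_axis_le s : In s newton0 ->
  (forall l, (l < n)%nat -> l <> i -> s l = 0) -> s i <= INR (alpha j i).
Proof.
  intros Hs Hso. destruct (suppR0_cases _ _ _ _ _ _ _ Hs) as [->|[b [Hb ->]]];
    [unfold zeroPt; apply pos_INR|].
  assert (Hob : on_axis n i b) by (intros l Hl Hli; apply INR_eq, Hso; auto).
  destruct (supp_cases _ _ _ _ _ _ _ Hb) as [[j' [Hj' ->]]| ->]; [apply le_INR, alpha_j_max; auto|].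
  unfold toR. rewrite als_bary by auto.
  rewrite <- (Rmult_1_l (INR (alpha j i))), <- lam_sum, Rmult_comm, <- rsum_scal.
  apply rsum_le. intros k Hk.
  assert (INR (alpha k i) <= INR (alpha j i))
    by (apply le_INR, alpha_j_max; [lia | apply als_on_axis_alpha; auto; lia]).
  assert (lam k > 0) by (apply lam_pos; lia). nra.
Qed.

Lemma axis_max_vertex : is_vertex n newton0 (toR (alpha j)).
Proof.
  split; [apply alpha_in_newton0; auto|].
  assert (key : forall a b t, in_conv n newton0 a -> in_conv n newton0 b -> 0 < t < 1 ->
            eqn_pt n (toR (alpha j)) (fun l => t * a l + (1 - t) * b l) ->
            eqn_pt n a (toR (alpha j))).
  { intros a b t Ha Hb Ht Heq.
    pose proof (in_conv_nonneg _ _ _ (suppR0_nonneg n r alpha c als cs) Ha) as Na.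
    pose proof (in_conv_nonneg _ _ _ (suppR0_nonneg n r alpha c als cs) Hb) as Nb.
    assert (Z : forall l, (l < n)%nat -> l <> i -> a l = 0 /\ b l = 0).
    { intros l Hl Hli. specialize (Heq l Hl). unfold toR in Heq.
      rewrite alpha_j_on_axis in Heq by auto. simpl in Heq.
      specialize (Na l Hl); specialize (Nb l Hl). split; nra. }
    assert (a i <= INR (alpha j i))
      by (apply (in_conv_axis_bound n newton0 i _ a i_lt_n (suppR0_nonneg n r alpha c als cs)
                   newton0_axis_le Ha); intros; apply Z; auto).
    assert (b i <= INR (alpha j i))
      by (apply (in_conv_axis_bound n newton0 i _ b i_lt_n (suppR0_nonneg n r alpha c als cs)
                   newton0_axis_le Hb); intros; apply Z; auto).
    intros l Hl. destruct (Nat.eq_dec l i) as [->|Hli].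
    - specialize (Heq i i_lt_n). unfold toR in *. nra.
    - unfold toR. rewrite alpha_j_on_axis by auto. apply Z; auto. }
  intros a b t Ha Hb Ht Heq. split; [eapply key; eauto|].
  apply (key b a (1 - t) Hb Ha ltac:(lra)). intros l Hl. rewrite Heq by auto. ring.
Qed.

End AxisMaximum.

Lemma coercive_CondC3 : coercive n f -> CondC3 n r alpha c als cs.
Proof.
  intros Hco i Hi.
  destruct (coercive_axis_exponent Hco i Hi) as [j0 [Hj0 [Ho0 Hge0]]].
  destruct (exists_argmax r (fun j => on_axis n i (alpha j)) (fun j => alpha j i))
    as [j [Hj [Ho Hmax]]]; [eauto|].
  destruct (alpha_even j Hj i Hi) as [k Hk].
  exists k. split; [specialize (Hmax j0 Hj0 Ho0); lia|]. split.
  - eapply is_vertex_eqn; [apply (axis_max_vertex i j); auto|].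
    intros l Hl. unfold toR. destruct (Nat.eqb_spec l i) as [->|]; [rewrite Hk | rewrite Ho]; auto.
  - intros Hz. specialize (Hz i Hi). simpl in Hz. rewrite Nat.eqb_refl in Hz. unfold zeroPt in Hz.
    specialize (Hmax j0 Hj0 Ho0). apply (not_0_INR (2 * k)); auto; lia.
Qed.

Lemma CondC3_axis_alpha : CondC3 n r alpha c als cs -> forall i, (i < n)%nat ->
  exists j k, (j <= r)%nat /\ (1 <= k)%nat /\ on_axis n i (alpha j) /\ alpha j i = (2 * k)%nat.
Proof.
  intros H3 i Hi. destruct (H3 i Hi) as [k [Hk Hv]].
  destruct (newton0_vertex_alpha _ Hv) as [j [Hj He]]. exists j, k. repeat split; auto.
  - intros l Hl Hli. specialize (He l Hl). unfold toR in He.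
    destruct (Nat.eqb_spec l i); [lia|]. apply INR_eq; simpl; lra.
  - specialize (He i Hi). cbv beta in He. rewrite Nat.eqb_refl in He. apply INR_eq; auto.
Qed.

Lemma vertex_term_nonneg x j : (j < S r)%nat -> 0 <= c j * monom n (alpha j) x.
Proof.
  intros Hj. apply Rmult_le_pos; [left; apply c_pos; lia | apply monom_even_nonneg, alpha_even; lia].
Qed.

Lemma vertex_sum_nonneg x : 0 <= g x.
Proof. apply rsum_nonneg. intros; apply vertex_term_nonneg; auto. Qed.

Lemma monom_als_abs_exp x : monom n als x <> 0 -> Rabs (monom n als x) = exp (log_monom n als x).
Proof.
  intros Hm. apply monom_abs_exp. intros i Hi Hp Hx. apply Hm, (monom_eq0 n als x i); auto.
Qed.

Lemma monom_alpha_exp x j : monom n als x <> 0 -> (j <= r)%nat ->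
  monom n (alpha j) x = exp (log_monom n (alpha j) x).
Proof.
  intros Hm Hj. rewrite <- (Rabs_right (monom n (alpha j) x))
    by (apply Rle_ge, monom_even_nonneg, alpha_even; auto).
  apply monom_abs_exp. intros i Hi Hp Hx. apply Hm, (monom_eq0 n als x i Hi); auto.
  apply INR_lt. rewrite als_bary, INR_0 by auto.
  apply Rlt_le_trans with (lam j * INR (alpha j i)).
  - apply Rmult_lt_0_compat; [apply lam_pos | apply lt_0_INR]; auto.
  - apply (rsum_term_le _ (fun j => lam j * INR (alpha j i))); [|lia].
    intros k Hk. apply Rmult_le_pos; [left; apply lam_pos; lia | apply pos_INR].
Qed.

Lemma log_monom_comb (mu : nat -> R) x :
  (forall i, (i < n)%nat -> INR (als i) = rsum (S r) (fun j => mu j * INR (alpha j i))) ->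
  log_monom n als x = rsum (S r) (fun j => mu j * log_monom n (alpha j) x).
Proof.
  intros H. unfold log_monom.
  rewrite (rsum_ext n _ (fun i => rsum (S r) (fun j => mu j * (INR (alpha j i) * ln (Rabs (x i)))))).
  - rewrite rsum_swap. apply rsum_ext; intros. rewrite rsum_scal; auto.
  - intros i Hi. rewrite H, (Rmult_comm _ (ln _)), <- rsum_scal by auto.
    apply rsum_ext; intros; ring.
Qed.

(* AM-GM with weights [nu], applied to the numbers [c j x^(alpha j) / nu j]: if
   [als = rho * sum_j nu j alpha j], then [|x^als| <= (g x / Theta_nu) ^ rho]. *)
Lemma log_monom_le_vertex_sum nu rho x :
  (forall j, (j <= r)%nat -> nu j > 0) -> rsum (S r) nu = 1 -> 0 < rho ->
  (forall i, (i < n)%nat -> INR (als i) = rsum (S r) (fun j => (rho * nu j) * INR (alpha j i))) ->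
  monom n als x <> 0 ->
  0 < g x /\ rho * log_theta r c nu + log_monom n als x <= rho * ln (g x).
Proof.
  intros Hnu Hs Hrho Hb Hm.
  assert (Ha : forall j, (j < S r)%nat -> c j * exp (log_monom n (alpha j) x) / nu j > 0).
  { intros j Hj. apply Rdiv_lt_0_compat; [apply Rmult_lt_0_compat; [apply c_pos; lia | apply exp_pos]|].
    apply Hnu; lia. }
  pose proof (weighted_amgm (S r) nu _ ltac:(intros; apply Hnu; lia) Hs Ha) as AM.
  rewrite (rsum_ext _ (fun j => nu j * (c j * exp (log_monom n (alpha j) x) / nu j))
                      (fun j => c j * monom n (alpha j) x)) in AM.
  2:{ intros j Hj. rewrite (monom_alpha_exp x j) by (auto; lia).
      field. specialize (Hnu j ltac:(lia)); lra. }
  rewrite (rsum_ext _ (fun j => nu j * ln (c j * exp (log_monom n (alpha j) x) / nu j))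
                      (fun j => nu j * ln (c j / nu j) + nu j * log_monom n (alpha j) x)) in AM.
  2:{ intros j Hj. specialize (c_pos j ltac:(lia)). specialize (Hnu j ltac:(lia)).
      replace (c j * exp (log_monom n (alpha j) x) / nu j)
        with (c j / nu j * exp (log_monom n (alpha j) x)) by (field; lra).
      rewrite ln_mult, ln_exp; [ring | apply Rdiv_lt_0_compat; auto | apply exp_pos]. }
  rewrite rsum_plus in AM. fold (vertex_sum n r alpha c x) (log_theta r c nu) in AM.
  assert (Hg : 0 < g x) by (eapply Rlt_le_trans; [apply exp_pos | apply AM]).
  split; auto.
  rewrite <- (exp_ln (g x)) in AM by auto. apply exp_le_inv in AM.
  rewrite (log_monom_comb (fun j => rho * nu j) x Hb).
  rewrite (rsum_ext _ _ (fun j => rho * (nu j * log_monom n (alpha j) x))), rsum_scal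
    by (intros; ring).
  nra.
Qed.

Lemma Theta_monom_le x : Theta r c lam * Rabs (monom n als x) <= g x.
Proof.
  destruct (Req_dec (monom n als x) 0) as [E|E].
  - rewrite E, Rabs_R0, Rmult_0_r. apply vertex_sum_nonneg.
  - destruct (log_monom_le_vertex_sum lam 1 x) as [Hg Hk]; auto; [lra| |].
    { intros i Hi. rewrite als_bary by auto. apply rsum_ext; intros; ring. }
    rewrite Theta_exp, monom_als_abs_exp, <- exp_plus, <- (exp_ln (g x)) by auto.
    apply exp_le_compat. lra.
Qed.

(* Each square [x i ^ 2] is controlled by the axis vertex [2 k e_i]. *)
Lemma vertex_sum_coercive : CondC3 n r alpha c als cs -> coercive n g.
Proof.
  intros H3 G.
  set (cm := rmin r c). assert (Hcm : cm > 0) by (apply rmin_pos; auto).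
  set (T := Rabs G / cm + 1).
  assert (HT0 : 0 <= Rabs G / cm) by (apply Rdiv_nonneg; [apply Rabs_pos | lra]).
  exists (sqrt (INR n * T)). intros x Hx.
  assert (Ex : exists i, (i < n)%nat /\ x i ^ 2 > T).
  { apply NNPP; intros Hn.
    assert (Hs : rsum n (fun i => x i ^ 2) <= INR n * T).
    { apply rsum_le_const. intros i Hi. apply Rnot_lt_le. intros Hc. apply Hn. eauto. }
    unfold norm2 in Hx. apply sqrt_le_1_alt in Hs. lra. }
  destruct Ex as [i [Hi HxT]].
  destruct (CondC3_axis_alpha H3 i Hi) as [j [k [Hj [Hk [Ho Ha]]]]].
  assert (Hterm : c j * monom n (alpha j) x <= g x).
  { apply (rsum_term_le _ (fun j => c j * monom n (alpha j) x)); [|lia].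
    intros; apply vertex_term_nonneg; auto. }
  rewrite (monom_on_axis n (alpha j) x i Hi Ho), Ha in Hterm.
  pose proof (pow_even_ge (x i) k Hk). assert (cm <= c j) by (apply rmin_le; auto).
  assert (cm * (x i ^ 2 - 1) <= c j * x i ^ (2 * k)).
  { apply Rle_trans with (c j * (x i ^ 2 - 1)).
    - apply Rmult_le_compat_r; unfold T in HxT; lra.
    - apply Rmult_le_compat_l; [left; apply c_pos | ]; auto. }
  assert (cm * (x i ^ 2 - 1) > cm * (Rabs G / cm))
    by (apply Rmult_lt_compat_l; auto; unfold T in HxT; lra).
  replace (cm * (Rabs G / cm)) with (Rabs G) in * by (field; lra).
  pose proof (Rle_abs G). lra.
Qed.

Lemma coercive_of_ge_vertex_sum d : d > 0 -> CondC3 n r alpha c als cs ->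
  (forall x, f x >= d * g x) -> coercive n f.
Proof.
  intros Hd H3 Hf M. destruct (vertex_sum_coercive H3 (M / d)) as [K HK].
  exists K. intros x Hx. specialize (HK x Hx). specialize (Hf x).
  assert (d * g x > d * (M / d)) by (apply Rmult_gt_compat_l; auto).
  replace (d * (M / d)) with M in * by (field; lra). lra.
Qed.

Lemma coercive_of_Theta : CondC3 n r alpha c als cs ->
  (even_vec n als -> cs > - Theta r c lam) -> (~ even_vec n als -> Rabs cs < Theta r c lam) ->
  coercive n f.
Proof.
  intros H3 He Ho. pose proof (Theta_pos r c lam) as HT.
  destruct (classic (even_vec n als /\ cs >= 0)) as [[Hev Hc]|Hn].
  - apply (coercive_of_ge_vertex_sum 1); auto; [lra|]. intros x. unfold circ_eval.
    fold (g x). pose proof (monom_even_nonneg n als x Hev). nra.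
  - assert (Hlt : Rabs cs < Theta r c lam).
    { destruct (classic (even_vec n als)) as [Hev|Hev]; auto.
      assert (cs < 0) by (apply Rnot_ge_lt; intros Hc; apply Hn; auto).
      rewrite Rabs_left by auto. specialize (He Hev). lra. }
    apply (coercive_of_ge_vertex_sum (1 - Rabs cs / Theta r c lam)); auto.
    { assert (Rabs cs / Theta r c lam < 1); [|lra].
      apply (Rmult_lt_reg_r (Theta r c lam)); auto. unfold Rdiv.
      rewrite Rmult_assoc, Rinv_l; lra. }
    intros x. pose proof (circ_eval_ge n r alpha c als cs x). pose proof (Theta_monom_le x).
    pose proof (Rabs_pos cs). pose proof (Rabs_pos (monom n als x)).
    assert (Rabs cs * (Theta r c lam * Rabs (monom n als x)) <= Rabs cs * g x)
      by (apply Rmult_le_compat_l; auto).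
    replace ((1 - Rabs cs / Theta r c lam) * g x)
      with (g x - Rabs cs * g x / Theta r c lam) by (field; lra).
    assert (Rabs cs * Rabs (monom n als x) <= Rabs cs * g x / Theta r c lam); [|lra].
    apply (Rmult_le_reg_l (Theta r c lam)); auto. field_simplify; lra.
Qed.

Definition axis_assignment (tau kap : nat -> nat) : Prop :=
  forall i, (i < n)%nat -> (tau i <= r)%nat /\ (1 <= kap i)%nat /\
    on_axis n i (alpha (tau i)) /\ alpha (tau i) i = (2 * kap i)%nat.

Section AxisAssignment.

Variables tau kap : nat -> nat.
Hypothesis tau_axis : axis_assignment tau kap.

Lemma axis_assignment_coord i l : (i < n)%nat -> (l < n)%nat ->
  alpha (tau i) l = if Nat.eqb i l then (2 * kap i)%nat else 0%nat.
Proof.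
  intros Hi Hl. destruct (tau_axis i Hi) as [_ [_ [Ho Ha]]].
  destruct (Nat.eqb_spec i l); [subst | apply Ho]; auto.
Qed.

Lemma axis_assignment_inj i i' : (i < n)%nat -> (i' < n)%nat -> tau i = tau i' -> i = i'.
Proof.
  intros Hi Hi' E. destruct (Nat.eq_dec i i') as [|Hne]; auto. exfalso.
  pose proof (axis_assignment_coord i' i' Hi' Hi') as A1. rewrite <- E in A1.
  rewrite (axis_assignment_coord i i' Hi Hi'), Nat.eqb_refl in A1.
  destruct (tau_axis i' Hi') as [_ [Hk _]]. destruct (Nat.eqb_spec i i'); lia.
Qed.

Lemma axis_assignment_NoDup : NoDup (map tau (seq 0 n)).
Proof.
  apply NoDup_map_NoDup_ForallPairs; [|apply seq_NoDup].
  intros x y Hx Hy. apply in_seq in Hx, Hy. apply axis_assignment_inj; lia.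
Qed.

Lemma axis_assignment_incl : incl (map tau (seq 0 n)) (seq 0 (S r)).
Proof.
  intros x Hx. apply in_map_iff in Hx as [i [<- Hi]]. apply in_seq in Hi. apply in_seq.
  destruct (tau_axis i ltac:(lia)); lia.
Qed.

Lemma axis_assignment_le : (n <= S r)%nat.
Proof.
  pose proof (NoDup_incl_length axis_assignment_NoDup axis_assignment_incl) as L.
  rewrite length_map, !length_seq in L. auto.
Qed.

Lemma axis_assignment_surj : S r = n -> forall j, (j <= r)%nat -> exists i, (i < n)%nat /\ tau i = j.
Proof.
  intros Hr j Hj.
  assert (Hincl : incl (seq 0 (S r)) (map tau (seq 0 n))).
  { apply NoDup_length_incl; [apply axis_assignment_NoDup | | apply axis_assignment_incl].
    rewrite length_map, !length_seq; lia. }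
  assert (Hin : In j (map tau (seq 0 n))) by (apply Hincl, in_seq; lia).
  apply in_map_iff in Hin as [i [Hi Hin]]. apply in_seq in Hin. exists i; split; auto; lia.
Qed.

End AxisAssignment.

Lemma axis_assignment_exists : CondC3 n r alpha c als cs -> exists tau kap, axis_assignment tau kap.
Proof.
  intros H3. apply (finite_choice2 (fun i j k => (j <= r)%nat /\ (1 <= k)%nat /\
                                     on_axis n i (alpha j) /\ alpha j i = (2 * k)%nat)).
  apply CondC3_axis_alpha, H3.
Qed.

Lemma CondC3_dim : CondC3 n r alpha c als cs -> (n <= S r)%nat.
Proof. intros H3. destruct (axis_assignment_exists H3) as [tau [kap HT]]. eapply axis_assignment_le; eauto. Qed.

Definition lift_weights (tau : nat -> nat) (m : nat) (e : nat -> R) (z : R) (j : nat) : R :=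
  rsum n (fun i => if Nat.eqb (tau i) j then e i else 0) + (if Nat.eqb j m then z else 0).

Section LiftWeights.

Variables (tau kap : nat -> nat) (m : nat).
Hypothesis tau_axis : axis_assignment tau kap.
Hypothesis m_le_r : (m <= r)%nat.

Lemma lift_weights_sum e z : rsum (S r) (lift_weights tau m e z) = rsum n e + z.
Proof.
  unfold lift_weights. rewrite rsum_plus, <- rsum_swap, (rsum_delta _ _ (fun _ => z)) by lia.
  f_equal. apply rsum_ext. intros i Hi.
  apply (rsum_delta_l _ _ (fun _ => e i)). destruct (tau_axis i Hi); lia.
Qed.

Lemma lift_weights_coord e z l : (l < n)%nat ->
  rsum (S r) (fun j => lift_weights tau m e z j * INR (alpha j l))
  = e l * INR (2 * kap l) + z * INR (alpha m l).
Proof.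
  intros Hl. unfold lift_weights.
  rewrite (rsum_ext _ _ (fun j => rsum n (fun i => if Nat.eqb (tau i) j then e i * INR (alpha j l) else 0)
                              + (if Nat.eqb j m then z * INR (alpha j l) else 0))).
  2:{ intros j _. rewrite Rmult_plus_distr_r, Rmult_comm, <- rsum_scal. f_equal.
      - apply rsum_ext; intros; destruct (Nat.eqb _ _); ring.
      - destruct (Nat.eqb _ _); ring. }
  rewrite rsum_plus, <- rsum_swap, (rsum_delta _ _ (fun j => z * INR (alpha j l))) by lia.
  f_equal.
  rewrite (rsum_ext _ _ (fun i => if Nat.eqb i l then e i * INR (2 * kap i) else 0));
    [apply (rsum_delta _ _ (fun i => e i * INR (2 * kap i))); auto|].
  intros i Hi. rewrite (rsum_delta_l _ _ (fun j => e i * INR (alpha j l)))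
    by (destruct (tau_axis i Hi); lia).
  rewrite (axis_assignment_coord tau kap tau_axis i l Hi Hl). destruct (Nat.eqb i l); simpl; ring.
Qed.

End LiftWeights.

(* When [r = n], some [alpha m] is not an axis vertex; writing it in terms of the
   axis vertices and the origin exhibits [0] as an affine combination of the [alpha j]. *)
Lemma zero_affine_comb : r = n -> CondC3 n r alpha c als cs ->
  exists nu, rsum (S r) nu = 1 /\
    forall l, (l < n)%nat -> rsum (S r) (fun j => nu j * INR (alpha j l)) = 0.
Proof.
  intros Hrn H3. destruct (axis_assignment_exists H3) as [tau [kap HT]].
  destruct (exists_not_in_range n r tau ltac:(lia)) as [m [Hm Hmiss]].
  set (d := fun i => INR (alpha m i) / INR (2 * kap i)).
  assert (Hd2 : forall l, (l < n)%nat -> d l * INR (2 * kap l) = INR (alpha m l)).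
  { intros l Hl. unfold d. destruct (HT l Hl) as [_ [Hk _]].
    pose proof (INR_double_pos _ Hk). field; lra. }
  set (D := 1 - rsum n d).
  assert (HD : D <> 0).
  { intros HD0.
    assert (Hm0 : lift_weights tau m d (-1) m = 0).
    { apply alpha_aff_indep; auto.
      - rewrite (lift_weights_sum tau kap m HT Hm). unfold D in HD0; lra.
      - intros l Hl. rewrite (lift_weights_coord tau kap m HT Hm d (-1) l Hl), Hd2 by auto. ring. }
    unfold lift_weights in Hm0. rewrite Nat.eqb_refl, (rsum_ext _ _ (fun _ => 0)), rsum_0 in Hm0;
      [lra|].
    intros i Hi. destruct (Nat.eqb_spec (tau i) m); [exfalso; apply (Hmiss i Hi) | ]; auto. }
  exists (lift_weights tau m (fun i => - d i / D) (1 / D)). split.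
  - rewrite (lift_weights_sum tau kap m HT Hm). unfold Rdiv.
    rewrite (rsum_ext _ _ (fun i => (- / D) * d i)), rsum_scal by (intros; ring).
    unfold D in *. field. auto.
  - intros l Hl. rewrite (lift_weights_coord tau kap m HT Hm _ _ l Hl), <- (Hd2 l Hl). field; auto.
Qed.

(* Moving the barycentric weights [lam] a little along an affine relation [nu] of
   the origin writes [als] with total weight [rho < 1]. *)
Lemma als_subunit_comb nu : rsum (S r) nu = 1 ->
  (forall l, (l < n)%nat -> rsum (S r) (fun j => nu j * INR (alpha j l)) = 0) ->
  exists rho nu', 0 < rho < 1 /\ (forall j, (j <= r)%nat -> nu' j > 0) /\ rsum (S r) nu' = 1 /\
    forall i, (i < n)%nat -> INR (als i) = rsum (S r) (fun j => (rho * nu' j) * INR (alpha j i)).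
Proof.
  intros Hns Hnc.
  set (s := rmin r (fun j => lam j / (1 + Rabs (nu j))) / 2).
  assert (Hs0 : s > 0).
  { unfold s. assert (rmin r (fun j => lam j / (1 + Rabs (nu j))) > 0); [|lra].
    apply rmin_pos. intros j Hj. apply Rdiv_lt_0_compat; [apply lam_pos; auto|].
    pose proof (Rabs_pos (nu j)); lra. }
  assert (Hsj : forall j, (j <= r)%nat -> s * (1 + Rabs (nu j)) <= lam j / 2).
  { intros j Hj. pose proof (rmin_le r (fun j => lam j / (1 + Rabs (nu j))) j Hj) as Hmin.
    pose proof (Rabs_pos (nu j)). unfold s, Rdiv in *.
    apply (Rmult_le_compat_r (1 + Rabs (nu j))) in Hmin; [|lra].
    rewrite Rmult_assoc, Rinv_l in Hmin by lra. lra. }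
  assert (Hl0 : lam 0%nat <= 1).
  { rewrite <- lam_sum. apply (rsum_term_le _ lam); [intros; left; apply lam_pos|]; lia. }
  assert (Hs1 : s <= 1 / 2).
  { specialize (Hsj 0%nat ltac:(lia)). pose proof (Rabs_pos (nu 0%nat)). nra. }
  assert (Hmu : forall j, (j <= r)%nat -> lam j - s * nu j > 0).
  { intros j Hj. specialize (Hsj j Hj). pose proof (Rle_abs (nu j)). specialize (lam_pos j Hj). nra. }
  exists (1 - s), (fun j => (lam j - s * nu j) / (1 - s)). repeat split; try lra.
  - intros j Hj. apply Rdiv_lt_0_compat; [apply Hmu; auto | lra].
  - unfold Rdiv. rewrite (rsum_ext _ _ (fun j => / (1 - s) * (lam j - s * nu j))), rsum_scal
      by (intros; ring).
    rewrite rsum_minus, rsum_scal, lam_sum, Hns. field. lra.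
  - intros i Hi.
    rewrite (rsum_ext _ _ (fun j => lam j * INR (alpha j i) - s * (nu j * INR (alpha j i))))
      by (intros j _; field; lra).
    rewrite rsum_minus, rsum_scal, Hnc, <- als_bary by auto. ring.
Qed.

(* With total weight [rho < 1], [|x^als| <= C g(x)^rho = o(g(x))]. *)
Lemma coercive_of_subunit_comb rho nu : cs <> 0 -> CondC3 n r alpha c als cs -> 0 < rho < 1 ->
  (forall j, (j <= r)%nat -> nu j > 0) -> rsum (S r) nu = 1 ->
  (forall i, (i < n)%nat -> INR (als i) = rsum (S r) (fun j => (rho * nu j) * INR (alpha j i))) ->
  coercive n f.
Proof.
  intros Hcs H3 Hrho Hnu Hns Hb.
  set (C0 := ln (Rabs cs) - rho * log_theta r c nu + ln 2).
  set (G0 := exp (C0 / (1 - rho))).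
  assert (Hhalf : forall x, G0 <= g x -> Rabs cs * Rabs (monom n als x) <= g x / 2).
  { intros x HG. destruct (Req_dec (monom n als x) 0) as [E|E].
    { rewrite E, Rabs_R0, Rmult_0_r. pose proof (vertex_sum_nonneg x). lra. }
    destruct (log_monom_le_vertex_sum nu rho x Hnu Hns ltac:(lra) Hb E) as [Hg Hk].
    assert (Hlg : C0 / (1 - rho) <= ln (g x)).
    { rewrite <- (ln_exp (C0 / (1 - rho))). fold G0.
      destruct HG as [HG|HG]; [left; apply ln_increasing; auto; apply exp_pos | rewrite HG; lra]. }
    assert (C0 <= (1 - rho) * ln (g x)).
    { apply (Rmult_le_compat_l (1 - rho)) in Hlg; [|lra]. unfold Rdiv in Hlg.
      rewrite <- Rmult_assoc, (Rmult_comm (1 - rho) C0), Rmult_assoc, Rinv_r in Hlg by lra. lra. }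
    assert (Hcs0 : 0 < Rabs cs) by (apply Rabs_pos_lt; auto).
    rewrite monom_als_abs_exp, <- (exp_ln (Rabs cs)), <- exp_plus, <- (exp_ln (g x / 2)) by (auto; lra).
    apply exp_le_compat. unfold Rdiv. rewrite ln_mult, ln_Rinv by lra.
    unfold C0 in *. lra. }
  intros M. destruct (vertex_sum_coercive H3 (G0 + 2 * Rabs M)) as [K HK].
  assert (HG0 : 0 < G0) by apply exp_pos.
  exists K. intros x Hx. specialize (HK x Hx).
  pose proof (circ_eval_ge n r alpha c als cs x).
  pose proof (Rabs_pos M). pose proof (Rle_abs M). specialize (Hhalf x ltac:(lra)). lra.
Qed.

Lemma coercive_of_full : r = n -> cs <> 0 -> CondC3 n r alpha c als cs -> coercive n f.
Proof.
  intros Hrn Hcs H3.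
  destruct (zero_affine_comb Hrn H3) as [nu [Hns Hnc]].
  destruct (als_subunit_comb nu Hns Hnc) as [rho [nu' [Hrho [Hpos [Hs Hb]]]]].
  exact (coercive_of_subunit_comb rho nu' Hcs H3 Hrho Hpos Hs Hb).
Qed.

Section SimplexCase.

Variables tau kap : nat -> nat.
Hypothesis tau_axis : axis_assignment tau kap.
Hypothesis Sr_eq_n : S r = n.

Lemma rsum_reindex h : rsum (S r) h = rsum n (fun i => h (tau i)).
Proof.
  rewrite (rsum_ext (S r) h (fun j => rsum n (fun i => if Nat.eqb (tau i) j then h j else 0))).
  - rewrite <- rsum_swap. apply rsum_ext. intros i Hi.
    apply (rsum_delta_l _ _ h). destruct (tau_axis i Hi); lia.
  - intros j Hj. destruct (axis_assignment_surj tau kap tau_axis Sr_eq_n j ltac:(lia)) as [i0 [Hi0 E]].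
    rewrite (rsum_ext _ _ (fun i => if Nat.eqb i i0 then h j else 0)).
    + symmetry. apply (rsum_delta _ _ (fun _ => h j)); auto.
    + intros i Hi. destruct (Nat.eqb_spec i i0) as [->|Hne]; [rewrite E, Nat.eqb_refl; auto|].
      destruct (Nat.eqb_spec (tau i) j); auto.
      exfalso. apply Hne, (axis_assignment_inj tau kap tau_axis); auto; congruence.
Qed.

Lemma als_axis_coord l : (l < n)%nat -> INR (als l) = lam (tau l) * INR (2 * kap l).
Proof.
  intros Hl. rewrite als_bary, rsum_reindex by auto.
  rewrite (rsum_ext _ _ (fun i => if Nat.eqb i l then lam (tau i) * INR (2 * kap i) else 0)).
  - apply (rsum_delta _ _ (fun i => lam (tau i) * INR (2 * kap i))); auto.
  - intros i Hi. rewrite (axis_assignment_coord tau kap tau_axis i l Hi Hl).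
    destruct (Nat.eqb_spec i l); subst; simpl; ring.
Qed.

(* Each vertex term equals [lam j * exp z] at this point, so [g = exp z]; and then
   [x^als = exp z / Theta]: this is where the circuit number enters. *)
Definition test_point (z : R) : nat -> R :=
  fun l => exp ((ln (lam (tau l) / c (tau l)) + z) / INR (2 * kap l)).

Lemma monom_test_point_alpha z i : (i < n)%nat ->
  c (tau i) * monom n (alpha (tau i)) (test_point z) = lam (tau i) * exp z.
Proof.
  intros Hi. destruct (tau_axis i Hi) as [Htr [Hk [Ho Ha]]].
  rewrite (monom_on_axis n _ _ i Hi Ho), Ha. unfold test_point.
  pose proof (INR_double_pos _ Hk). specialize (lam_pos _ Htr). specialize (c_pos _ Htr).
  rewrite pow_exp.
  replace (INR (2 * kap i) * ((ln (lam (tau i) / c (tau i)) + z) / INR (2 * kap i)))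
    with (ln (lam (tau i) / c (tau i)) + z) by (field; lra).
  rewrite exp_plus, exp_ln by (apply Rdiv_lt_0_compat; auto). field. lra.
Qed.

Lemma vertex_sum_test_point x z :
  (forall j, (j <= r)%nat -> monom n (alpha j) x = monom n (alpha j) (test_point z)) ->
  g x = exp z.
Proof.
  intros Hx. unfold vertex_sum.
  rewrite (rsum_ext _ _ (fun j => c j * monom n (alpha j) (test_point z)))
    by (intros j Hj; rewrite Hx by lia; auto).
  rewrite rsum_reindex, (rsum_ext _ _ (fun i => exp z * lam (tau i)))
    by (intros i Hi; rewrite monom_test_point_alpha by auto; ring).
  rewrite rsum_scal, <- rsum_reindex, lam_sum. ring.
Qed.

Lemma monom_test_point_als z : monom n als (test_point z) = exp z / Theta r c lam.
Proof.
  unfold test_point. rewrite monom_exp.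
  rewrite (rsum_ext _ _ (fun l => lam (tau l) * ln (lam (tau l) / c (tau l)) + z * lam (tau l))).
  2:{ intros l Hl. rewrite als_axis_coord by auto.
      destruct (tau_axis l Hl) as [_ [Hk _]]. pose proof (INR_double_pos _ Hk). field. lra. }
  rewrite rsum_plus, rsum_scal, <- (rsum_reindex lam), lam_sum.
  rewrite <- (rsum_reindex (fun j => lam j * ln (lam j / c j))), Theta_exp. unfold log_theta.
  rewrite (rsum_ext _ (fun j => lam j * ln (lam j / c j)) (fun j => (-1) * (lam j * ln (c j / lam j)))).
  - rewrite rsum_scal. unfold Rdiv. rewrite <- exp_Ropp, <- exp_plus. f_equal. ring.
  - intros j Hj. specialize (lam_pos j ltac:(lia)). specialize (c_pos j ltac:(lia)).
    replace (lam j / c j) with (/ (c j / lam j)) by (field; lra).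
    rewrite ln_Rinv by (apply Rdiv_lt_0_compat; lra). ring.
Qed.

Lemma circ_eval_neg_test_point l0 z : (l0 < n)%nat ->
  f (neg_coord l0 (test_point z)) = exp z + cs * ((-1) ^ (als l0) * (exp z / Theta r c lam)).
Proof.
  intros Hl0. unfold circ_eval. fold (vertex_sum n r alpha c (neg_coord l0 (test_point z))).
  rewrite monom_neg_coord, monom_test_point_als by auto. f_equal.
  apply vertex_sum_test_point. intros j Hj.
  destruct (alpha_even j Hj l0 Hl0) as [k Hk].
  rewrite monom_neg_coord, Hk, pow_mult by auto. replace ((-1) ^ 2) with 1 by ring.
  rewrite pow1. ring.
Qed.

Lemma circ_eval_test_point z : f (test_point z) = exp z + cs * (exp z / Theta r c lam).
Proof.
  unfold circ_eval. fold (vertex_sum n r alpha c (test_point z)).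
  rewrite monom_test_point_als, (vertex_sum_test_point _ z); auto.
Qed.

Lemma coercive_test_path_pos (p : R -> nat -> R) : coercive n f ->
  (forall z, Rabs (p z 0%nat) = test_point z 0%nat) -> exists z, f (p z) > 0.
Proof.
  intros Hco Hp. destruct (Hco 0) as [K HK].
  destruct (tau_axis 0%nat ltac:(lia)) as [_ [Hk _]]. pose proof (INR_double_pos _ Hk).
  set (z := INR (2 * kap 0%nat) * Rabs K - ln (lam (tau 0%nat) / c (tau 0%nat))).
  exists z. apply HK.
  eapply Rlt_le_trans; [|apply (norm2_ge_coord n _ 0%nat); lia].
  rewrite Hp. unfold test_point, z.
  replace ((ln (lam (tau 0%nat) / c (tau 0%nat)) + (INR (2 * kap 0%nat) * Rabs K
             - ln (lam (tau 0%nat) / c (tau 0%nat)))) / INR (2 * kap 0%nat))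
    with (Rabs K) by (field; lra).
  pose proof (exp_ineq1_le (Rabs K)). pose proof (Rle_abs K). lra.
Qed.

End SimplexCase.

Lemma coercive_Theta_bound : S r = n -> CondC3 n r alpha c als cs -> coercive n f ->
  (even_vec n als -> cs > - Theta r c lam) /\ (~ even_vec n als -> Rabs cs < Theta r c lam).
Proof.
  intros Hn H3 Hco. destruct (axis_assignment_exists H3) as [tau [kap HT]].
  pose proof (Theta_pos r c lam) as HTp.
  assert (Hlow : cs > - Theta r c lam).
  { destruct (coercive_test_path_pos tau kap HT Hn (test_point tau kap) Hco) as [z Hz].
    { intros z. apply Rabs_right, Rle_ge, Rlt_le, exp_pos. }
    rewrite (circ_eval_test_point tau kap HT Hn) in Hz.
    apply Rnot_le_lt. intros Hc. pose proof (exp_pos z).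
    assert (cs * (exp z / Theta r c lam) <= - Theta r c lam * (exp z / Theta r c lam))
      by (apply Rmult_le_compat_r; [apply Rdiv_nonneg|]; lra).
    replace (- Theta r c lam * (exp z / Theta r c lam)) with (- exp z) in * by (field; lra).
    lra. }
  split; [auto|]. intros Hodd.
  unfold even_vec in Hodd. apply not_all_ex_not in Hodd as [l0 Hl0].
  apply imply_to_and in Hl0 as [Hl0 Hodd].
  destruct (Nat.Even_or_Odd (als l0)) as [Hv|[k Hk]]; [contradiction|].
  destruct (coercive_test_path_pos tau kap HT Hn (fun z => neg_coord l0 (test_point tau kap z)) Hco)
    as [z Hz].
  { intros z. unfold neg_coord. destruct (Nat.eqb 0 l0); [rewrite Rabs_Ropp|];
      apply Rabs_right, Rle_ge, Rlt_le, exp_pos. }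
  rewrite (circ_eval_neg_test_point tau kap HT Hn l0 z Hl0), Hk, Nat.add_1_r, pow_1_odd in Hz.
  assert (cs < Theta r c lam).
  { apply Rnot_le_lt. intros Hc. pose proof (exp_pos z).
    assert (Theta r c lam * (exp z / Theta r c lam) <= cs * (exp z / Theta r c lam))
      by (apply Rmult_le_compat_r; [apply Rdiv_nonneg|]; lra).
    replace (Theta r c lam * (exp z / Theta r c lam)) with (exp z) in * by (field; lra).
    lra. }
  apply Rabs_def1; lra.
Qed.

Lemma coercive_r0_coef_pos : r = 0%nat -> (0 < n)%nat -> coercive n f -> c 0%nat + cs > 0.
Proof.
  intros Hr Hn Hco.
  destruct (coercive_axis_exponent Hco 0%nat Hn) as [j [Hj [Ho _]]].
  replace j with 0%nat in Ho by lia.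
  assert (Hf : forall t, f (axis_pt 0 t) = (c 0%nat + cs) * t ^ (alpha 0%nat 0%nat)).
  { intros t. unfold circ_eval. rewrite Hr. simpl rsum.
    rewrite (monom_ext_exp n als (alpha 0%nat)) by (apply als_eq_alpha0; auto).
    rewrite (monom_on_axis n _ _ 0%nat Hn Ho). unfold axis_pt. simpl. ring. }
  apply Rnot_le_lt. intros Hle. destruct (Hco 0) as [K HK].
  specialize (HK (axis_pt 0 (Rabs K + 1))). rewrite norm2_axis_pt, Hf in HK by auto.
  pose proof (Rabs_pos K). pose proof (Rle_abs K).
  rewrite (Rabs_right (Rabs K + 1)) in HK by lra.
  assert (0 <= (Rabs K + 1) ^ alpha 0%nat 0%nat) by (apply pow_le; lra).
  assert ((c 0%nat + cs) * (Rabs K + 1) ^ alpha 0%nat 0%nat <= 0) by nra.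
  lra.
Qed.

Lemma coercive_CondC2 : coercive n f -> CondC2 n r alpha c als cs.
Proof.
  intros Hco b Hb. destruct (newton0_vertex_alpha _ Hb) as [j [Hj He]].
  assert (Hbj : forall i, (i < n)%nat -> b i = alpha j i) by (intros i Hi; apply INR_eq, He; auto).
  destruct (Nat.eq_dec r 0) as [Hr|Hr].
  - replace j with 0%nat in * by lia. rewrite (coef_alpha0 b Hr Hbj).
    apply coercive_r0_coef_pos; auto.
    destruct n as [|n']; [|lia]. exfalso. destruct Hb as [_ Hz]. apply Hz. intros i Hi; lia.
  - rewrite (coef_alpha j b); auto; lia.
Qed.

End CircuitPolynomial.

Theorem mainTheorem4 (n r : nat) (alpha : nat -> nat -> nat) (c : nat -> R)
  (als : nat -> nat) (cs : R) (lam : nat -> R) :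
  is_circuit n r alpha c als cs ->
  bary n r alpha als lam ->
  (forall j, (j <= r)%nat -> lam j > 0) ->
  (coercive n (circ_eval n r alpha c als cs) <->
   ((r = n)%nat /\ CondC1 n r alpha c als cs /\ CondC2 n r alpha c als cs /\
      CondC3 n r alpha c als cs)
   \/
   ((S r = n)%nat /\ CondC1 n r alpha c als cs /\ CondC2 n r alpha c als cs /\
      CondC3 n r alpha c als cs /\
      (even_vec n als -> cs > - Theta r c lam) /\
      (~ even_vec n als -> Rabs cs < Theta r c lam))).
Proof.
  intros [Hrn [Hcs [Hac [Hvert [Haff [lam0 [Hbary0 [_ Huniq]]]]]]]] [Hsum Hbary] Hpos.
  assert (Heven : forall j, (j <= r)%nat -> even_vec n (alpha j)) by (apply Hac).
  assert (Hc : forall j, (j <= r)%nat -> c j > 0) by (apply Hac).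
  assert (Hhull : forall j, (j <= r)%nat -> in_conv n (suppR n r alpha c als cs) (toR (alpha j)))
    by (intros j Hj; apply Hvert; exists j; split; [auto | intros i _; auto]).
  assert (Hunique : forall mu, bary n r alpha als mu -> forall j, (j <= r)%nat -> mu j = lam j)
    by (intros mu Hmu j Hj; rewrite (Huniq mu Hmu j Hj), (Huniq lam (conj Hsum Hbary) j Hj); auto).
  assert (H1 : CondC1 n r alpha c als cs) by (eapply circuit_CondC1; eauto).
  split.
  - intros Hco.
    assert (H2 : CondC2 n r alpha c als cs) by (eapply coercive_CondC2; eauto).
    assert (H3 : CondC3 n r alpha c als cs) by (eapply coercive_CondC3; eauto).
    assert (Hdim : (n <= S r)%nat) by (eapply CondC3_dim; eauto).
    destruct (Nat.eq_dec r n) as [E|E]; [left; auto | right].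
    assert (Hn : S r = n) by lia.
    destruct (coercive_Theta_bound n r alpha c als cs lam) as [He Ho]; auto.
    repeat split; auto.
  - intros [[Hr [_ [_ H3]]] | [_ [_ [_ [H3 [He Ho]]]]]].
    + eapply coercive_of_full; eauto.
    + eapply coercive_of_Theta; eauto.
Qed.
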